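(* Let $\Phi$ be a dictionary with coherence $\mu$, let $m\ge1$ with $m<\tfrac12(\mu^{-1}+1)$, and let $y=\Phi x^*$ be an $m$-sparse signal with $\|x^*\|_0\le m$ and support $\Lambda_{opt}$. Let $\beta>0$ with $\|x^*\|_1\le\beta$. Then the iterates $x_k$ of the Frank-Wolfe algorithm for Problem (P$_\beta$) converge to $x^*$ as $k\to\infty$.
   Context: A dictionary is a matrix $\Phi=[\varphi_1,\dots,\varphi_n]\in\mathbb{R}^{d\times n}$ whose columns (atoms) satisfy $\|\varphi_i\|_2=1$. Its coherence is $\mu=\max_{j\neq k}|\langle\varphi_j,\varphi_k\rangle|$. A signal $y\in\mathbb{R}^d$ is $m$-sparse if $y=\Phi x^*$ for some $x^*\in\mathbb{R}^n$ with at most $m$ nonzero entries; when $m<\tfrac12(\mu^{-1}+1)$ such an $x^*$ is unique, and its support is denoted $\Lambda_{opt}$. Problem (P$_\beta$): minimize $f(x)=\tfrac12\|y-\Phi x\|_2^2$ over $B_1(\beta)=\{x\in\mathbb{R}^n:\|x\|_1\le\beta\}$. Frank-Wolfe algorithm for (P$_\beta$): set $x_0=0$. For $k=0,1,2,\dots$: let $r_k=y-\Phi x_k$; choose $i_k\in\arg\max_{i}|\langle\varphi_i,r_k\rangle|$ (any maximizer); set $s_k=\operatorname{sign}(\langle\varphi_{i_k},r_k\rangle)\,\beta\, e_{i_k}$ ($e_i$ the canonical basis vectors, $\operatorname{sign}(0)\in\{\pm1\}$ arbitrary); choose $\gamma_k\in\arg\min_{\gamma\in[0,1]}\|y-\Phi(x_k+\gamma(s_k-x_k))\|_2^2$;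 set $x_{k+1}=x_k+\gamma_k(s_k-x_k)$. *)

From Stdlib Require Import Reals Lra Lia.
Open Scope R_scope.

(* Vectors in R^k are functions nat -> R (only indices < k matter).
   A d x n matrix Phi is a function Phi i j (row i < d, column j < n). *)

Fixpoint rsum (k : nat) (f : nat -> R) : R :=
  match k with
  | O => 0
  | S k' => rsum k' f + f k'
  end.

(* finite max of f 0, ..., f (k-1), with value 0 on the empty range
   (used only on nonnegative quantities) *)
Fixpoint rmax (k : nat) (f : nat -> R) : R :=
  match k with
  | O => 0
  | S k' => Rmax (rmax k' f) (f k')
  end.

Definition ip (d : nat) (u v : nat -> R) : R := rsum d (fun i => u i * v i).
Definition norm2 (d : nat) (u : nat -> R) : R := sqrt (ip d u u).
Definition norm1 (n : nat) (x : nat -> R) : R := rsum n (fun j => Rabs (x j)).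

Fixpoint l0 (n : nat) (x : nat -> R) : nat :=
  match n with
  | O => O
  | S n' => (l0 n' x + if Req_EM_T (x n') 0 then 0 else 1)%nat
  end.

Definition col (Phi : nat -> nat -> R) (j : nat) : nat -> R := fun i => Phi i j.

Definition mulv (n : nat) (Phi : nat -> nat -> R) (x : nat -> R) : nat -> R :=
  fun i => rsum n (fun j => Phi i j * x j).

Definition vsub (u v : nat -> R) : nat -> R := fun i => u i - v i.

Definition e_vec (i : nat) : nat -> R := fun j => if Nat.eq_dec j i then 1 else 0.

Definition dictionary (d n : nat) (Phi : nat -> nat -> R) : Prop :=
  forall j, (j < n)%nat -> norm2 d (col Phi j) = 1.

(* coherence  mu = max_{j <> k} |<phi_j, phi_k>|  (0 if n <= 1) *)
Definition coherence (d n : nat) (Phi : nat -> nat -> R) : R :=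
  rmax n (fun j => rmax n (fun k =>
    if Nat.eq_dec j k then 0 else Rabs (ip d (col Phi j) (col Phi k)))).

Definition fobj (d n : nat) (Phi : nat -> nat -> R) (y x : nat -> R) : R :=
  / 2 * (norm2 d (vsub y (mulv n Phi x))) ^ 2.

(* One Frank-Wolfe step from xk to xk1 for (P_beta), with any admissible
   choice of maximizer i_k, of sign (arbitrary when the correlation is 0),
   and of step gamma_k in the argmin over [0,1]. *)
Definition fw_step (d n : nat) (Phi : nat -> nat -> R) (y : nat -> R) (beta : R)
    (xk xk1 : nat -> R) : Prop :=
  let r := vsub y (mulv n Phi xk) in
  exists (ik : nat) (sg gam : R),
    (ik < n)%nat /\
    (forall i, (i < n)%nat -> Rabs (ip d (col Phi i) r) <= Rabs (ip d (col Phi ik) r)) /\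
    (sg = 1 \/ sg = -1) /\
    (0 < ip d (col Phi ik) r -> sg = 1) /\
    (ip d (col Phi ik) r < 0 -> sg = -1) /\
    let sk := fun j => sg * beta * e_vec ik j in
    let upd := fun g : R => fun j => xk j + g * (sk j - xk j) in
    0 <= gam <= 1 /\
    (forall g, 0 <= g <= 1 ->
       fobj d n Phi y (upd gam) <= fobj d n Phi y (upd g)) /\
    xk1 = upd gam.

Definition fw_iterates (d n : nat) (Phi : nat -> nat -> R) (y : nat -> R) (beta : R)
    (x : nat -> nat -> R) : Prop :=
  x O = (fun _ => 0) /\ forall k, fw_step d n Phi y beta (x k) (x (S k)).

From Stdlib Require Import Reals Lra Lia Classical FunctionalExtensionality.
Open Scope R_scope.

(* Write mu for the coherence and w_k = x* - x_k.  The proof has three parts.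
   1. Coherence estimates on the Gram matrix: for a vector v with at most s
      nonzero entries, (1 + mu - mu s) ||v||^2 <= ||Phi v||^2, and (Tropp's
      exact recovery condition) when (2m - 1) mu < 1 and v is m-sparse and
      nonzero, every maximiser of |<phi_i, Phi v>| lies in the support of v.
   2. One Frank-Wolfe step preserves the invariant "supp x_k is contained in
      Lambda_opt and ||x_k||_1 <= beta": the selected atom lies in Lambda_opt
      whenever the residual Phi w_k is nonzero, and otherwise the line search
      does not move.  Under the invariant, the usual duality-gap argument
      gives f(x_{k+1}) <= (1 - 2g) f(x_k) + 2 g^2 beta^2 for every g in [0,1].
   3. Such a recursion forces f(x_k) -> 0, and since w_k is m-sparse,
      (1 + mu - mu m) ||w_k||^2 <= 2 f(x_k), so ||x_k - x*||_2 -> 0. *)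

Lemma rsum_ext k f g : (forall j, (j < k)%nat -> f j = g j) -> rsum k f = rsum k g.
Proof.
  induction k; simpl; intros H; [reflexivity|].
  rewrite IHk by (intros; apply H; lia). rewrite H by lia. reflexivity.
Qed.

Lemma rsum_zero k f : (forall j, (j < k)%nat -> f j = 0) -> rsum k f = 0.
Proof.
  induction k; simpl; intros H; [reflexivity|].
  rewrite IHk by (intros; apply H; lia). rewrite H by lia. lra.
Qed.

Lemma rsum_plus k f g : rsum k (fun j => f j + g j) = rsum k f + rsum k g.
Proof. induction k; simpl; [lra|]. rewrite IHk; lra. Qed.

Lemma rsum_minus k f g : rsum k (fun j => f j - g j) = rsum k f - rsum k g.
Proof. induction k; simpl; [lra|]. rewrite IHk; lra. Qed.

Lemma rsum_scal k c f : rsum k (fun j => c * f j) = c * rsum k f.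
Proof. induction k; simpl; [lra|]. rewrite IHk; lra. Qed.

Lemma rsum_scalr k c f : rsum k (fun j => f j * c) = rsum k f * c.
Proof. induction k; simpl; [lra|]. rewrite IHk; lra. Qed.

Lemma rsum_le k f g : (forall j, (j < k)%nat -> f j <= g j) -> rsum k f <= rsum k g.
Proof.
  induction k; simpl; intros H; [lra|].
  pose proof (IHk ltac:(intros; apply H; lia)). pose proof (H k ltac:(lia)). lra.
Qed.

Lemma rsum_ge0 k f : (forall j, (j < k)%nat -> 0 <= f j) -> 0 <= rsum k f.
Proof.
  intros H. rewrite <- (rsum_zero k (fun _ => 0)) by auto. apply rsum_le; auto.
Qed.

Lemma rsum_abs k f : Rabs (rsum k f) <= rsum k (fun j => Rabs (f j)).
Proof.
  induction k; simpl; [rewrite Rabs_R0; lra|].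
  pose proof (Rabs_triang (rsum k f) (f k)). lra.
Qed.

Lemma rsum_swap a b f :
  rsum a (fun i => rsum b (fun j => f i j)) = rsum b (fun j => rsum a (fun i => f i j)).
Proof.
  induction a; simpl.
  - symmetry; apply rsum_zero; auto.
  - rewrite IHa, <- rsum_plus. reflexivity.
Qed.

Lemma rsum_delta k j a :
  (j < k)%nat -> rsum k (fun l => if Nat.eq_dec l j then a else 0) = a.
Proof.
  induction k; intros H; [lia|]. simpl. destruct (Nat.eq_dec k j) as [->|].
  - rewrite rsum_zero; [lra|]. intros l Hl. destruct (Nat.eq_dec l j); [lia|auto].
  - rewrite IHk by lia. lra.
Qed.

Lemma rsum_evec k j h : (j < k)%nat -> rsum k (fun l => e_vec j l * h l) = h j.
Proof.
  intros H. rewrite <- (rsum_delta k j (h j)) by auto. apply rsum_ext.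
  intros l _. unfold e_vec. destruct (Nat.eq_dec l j); subst; lra.
Qed.

Lemma rsum_ge_term k f i :
  (forall j, (j < k)%nat -> 0 <= f j) -> (i < k)%nat -> f i <= rsum k f.
Proof.
  induction k; intros H Hi; [lia|]. simpl.
  assert (0 <= rsum k f) by (apply rsum_ge0; intros; apply H; lia).
  destruct (Nat.eq_dec i k) as [->|]; [lra|].
  pose proof (IHk ltac:(intros; apply H; lia) ltac:(lia)). pose proof (H k ltac:(lia)). lra.
Qed.

Lemma rmax_ge k f i : (i < k)%nat -> f i <= rmax k f.
Proof.
  induction k; intros Hi; [lia|]. simpl. destruct (Nat.eq_dec i k) as [->|]; [apply Rmax_r|].
  pose proof (IHk ltac:(lia)). pose proof (Rmax_l (rmax k f) (f k)); lra.
Qed.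

Lemma rmax_ge0 k f : 0 <= rmax k f.
Proof. induction k; simpl; [lra|]. pose proof (Rmax_l (rmax k f) (f k)); lra. Qed.

Lemma argmax_exists k f :
  (0 < k)%nat -> exists i, (i < k)%nat /\ forall j, (j < k)%nat -> f j <= f i.
Proof.
  induction k as [|k IHk]; intros H; [lia|]. destruct k.
  - exists 0%nat; split; [lia|]. intros j Hj; replace j with 0%nat by lia; lra.
  - destruct (IHk ltac:(lia)) as [i [Hi Hm]].
    destruct (Rle_dec (f (S k)) (f i)).
    + exists i; split; [lia|]. intros j Hj.
      destruct (Nat.eq_dec j (S k)) as [->|]; auto. apply Hm; lia.
    + exists (S k); split; [lia|]. intros j Hj.
      destruct (Nat.eq_dec j (S k)) as [->|]; [lra|]. pose proof (Hm j ltac:(lia)); lra.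
Qed.

(* v vanishes wherever u does (on the first n coordinates): supp v <= supp u. *)
Definition supported_in (n : nat) (u v : nat -> R) : Prop :=
  forall j, (j < n)%nat -> u j = 0 -> v j = 0.

Lemma l0_mono k u v : supported_in k u v -> (l0 k v <= l0 k u)%nat.
Proof.
  induction k; intros H; simpl; [lia|].
  pose proof (IHk ltac:(intros j Hj; apply H; lia)).
  destruct (Req_EM_T (v k) 0), (Req_EM_T (u k) 0); try lia.
  exfalso. auto with arith.
Qed.

Lemma l0_mono_plus_one k u v i :
  (forall j, (j < k)%nat -> j <> i -> u j = 0 -> v j = 0) -> (l0 k v <= S (l0 k u))%nat.
Proof.
  induction k; intros H; simpl; [lia|].
  pose proof (IHk ltac:(intros; apply H; auto; lia)).
  destruct (Req_EM_T (v k) 0), (Req_EM_T (u k) 0); try lia.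
  destruct (Nat.eq_dec k i) as [->|].
  - assert (l0 i v <= l0 i u)%nat by (apply l0_mono; intros j Hj Hu; apply H; auto; lia). lia.
  - exfalso. auto with arith.
Qed.

Lemma norm1_le_l0_max k v M :
  (forall j, (j < k)%nat -> Rabs (v j) <= M) -> 0 <= M -> norm1 k v <= INR (l0 k v) * M.
Proof.
  unfold norm1. induction k; intros H HM; simpl; [lra|].
  pose proof (IHk ltac:(intros; apply H; lia) HM). rewrite plus_INR.
  destruct (Req_EM_T (v k) 0) as [E|].
  - rewrite E, Rabs_R0; simpl; lra.
  - pose proof (H k ltac:(lia)). simpl. lra.
Qed.

(* Cauchy-Schwarz on the support: ||v||_1^2 <= ||v||_0 ||v||_2^2. *)
Lemma norm1_sq_le_l0 k v : norm1 k v ^ 2 <= INR (l0 k v) * ip k v v.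
Proof.
  unfold norm1, ip. induction k; simpl; [lra|]. rewrite plus_INR.
  set (A := rsum k (fun j => Rabs (v j))) in *.
  set (Q := rsum k (fun j => v j * v j)) in *.
  set (N := INR (l0 k v)) in *.
  assert (HA : 0 <= A) by (apply rsum_ge0; intros; apply Rabs_pos).
  assert (HQ : 0 <= Q) by (apply rsum_ge0; intros; nra).
  assert (HN : 0 <= N) by apply pos_INR.
  destruct (Req_EM_T (v k) 0) as [E|Hne].
  - rewrite E, Rabs_R0. simpl. nra.
  - simpl. replace (v k * v k) with (Rabs (v k) * Rabs (v k))
      by (rewrite <- Rabs_mult; apply Rabs_right; nra).
    set (t := Rabs (v k)). assert (0 <= t) by apply Rabs_pos.
    destruct (Req_dec N 0) as [HN0|HN0].
    + rewrite HN0 in *. assert (A = 0) by nra. subst A. nra.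
    + assert (HAt : 2 * A * t <= Q + N * t * t).
      { apply Rmult_le_reg_l with N; [lra|].
        pose proof (pow2_ge_0 (A - N * t)). simpl in *. nra. }
      nra.
Qed.

Lemma ip_sym d u v : ip d u v = ip d v u.
Proof. unfold ip. apply rsum_ext; intros; ring. Qed.

Lemma ip_ge0 d u : 0 <= ip d u u.
Proof. unfold ip. apply rsum_ge0; intros; nra. Qed.

Lemma ip_zero_r d u v : (forall i, (i < d)%nat -> v i = 0) -> ip d u v = 0.
Proof. intros H. unfold ip. apply rsum_zero. intros i Hi. rewrite H by auto. ring. Qed.

Lemma norm2_sq d u : norm2 d u ^ 2 = ip d u u.
Proof. unfold norm2. apply pow2_sqrt, ip_ge0. Qed.

Lemma ip_mulv d n Phi u w :
  ip d (mulv n Phi u) w = rsum n (fun j => u j * ip d (col Phi j) w).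
Proof.
  unfold ip, mulv, col.
  rewrite (rsum_ext d _ (fun i => rsum n (fun j => Phi i j * u j * w i))).
  2:{ intros; rewrite <- rsum_scalr; reflexivity. }
  rewrite rsum_swap. apply rsum_ext; intros. rewrite <- rsum_scal.
  apply rsum_ext; intros; ring.
Qed.

Definition gram (d : nat) (Phi : nat -> nat -> R) (j l : nat) : R :=
  ip d (col Phi j) (col Phi l).

Lemma ip_mulv_mulv d n Phi u v :
  ip d (mulv n Phi u) (mulv n Phi v) =
  rsum n (fun j => rsum n (fun l => u j * v l * gram d Phi j l)).
Proof.
  rewrite ip_mulv. apply rsum_ext; intros j _.
  rewrite ip_sym, ip_mulv, <- rsum_scal. apply rsum_ext; intros.
  unfold gram. rewrite ip_sym. ring.
Qed.

Lemma coherence_ge0 d n Phi : 0 <= coherence d n Phi.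
Proof. apply rmax_ge0. Qed.

Section Coherence.

Variables (d n : nat) (Phi : nat -> nat -> R).
Hypothesis Hd : dictionary d n Phi.
Local Notation mu := (coherence d n Phi).

Lemma gram_diag j : (j < n)%nat -> gram d Phi j j = 1.
Proof. intros Hj. unfold gram. rewrite <- norm2_sq, (Hd j Hj). ring. Qed.

Lemma gram_off j l : (j < n)%nat -> (l < n)%nat -> j <> l -> Rabs (gram d Phi j l) <= mu.
Proof.
  intros Hj Hl Hjl. unfold coherence.
  eapply Rle_trans; [| apply (rmax_ge n _ j Hj)]. simpl.
  eapply Rle_trans; [| apply (rmax_ge n _ l Hl)]. simpl.
  destruct (Nat.eq_dec j l); [contradiction|]. unfold gram; lra.
Qed.

Lemma gram_le1 j l : mu <= 1 -> (j < n)%nat -> (l < n)%nat -> Rabs (gram d Phi j l) <= 1.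
Proof.
  intros Hmu Hj Hl. destruct (Nat.eq_dec j l) as [->|Hjl].
  - rewrite gram_diag, Rabs_R1 by auto. lra.
  - pose proof (gram_off j l Hj Hl Hjl). lra.
Qed.

Lemma gram_lower v :
  (1 + mu) * ip n v v - mu * norm1 n v ^ 2 <= ip d (mulv n Phi v) (mulv n Phi v).
Proof.
  pose proof (coherence_ge0 d n Phi) as Hmu.
  rewrite ip_mulv_mulv.
  replace ((1 + mu) * ip n v v - mu * norm1 n v ^ 2) with
    (rsum n (fun j => rsum n (fun l => - mu * (Rabs (v j) * Rabs (v l)) +
       (if Nat.eq_dec l j then (1 + mu) * (v j * v j) else 0)))).
  2:{ rewrite (rsum_ext n _ (fun j => (- mu * norm1 n v) * Rabs (v j) + (1 + mu) * (v j * v j))).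
      - rewrite rsum_plus, !rsum_scal. unfold norm1, ip. ring.
      - intros j Hj. rewrite rsum_plus, rsum_delta, rsum_scal, rsum_scal by auto.
        unfold norm1. ring. }
  apply rsum_le; intros j Hj. apply rsum_le; intros l Hl.
  destruct (Nat.eq_dec l j) as [->|Hlj].
  - rewrite gram_diag by auto.
    replace (Rabs (v j) * Rabs (v j)) with (v j * v j)
      by (rewrite <- Rabs_mult; symmetry; apply Rabs_right; nra). lra.
  - pose proof (gram_off j l Hj Hl ltac:(auto)).
    assert (Rabs (v j * v l * gram d Phi j l) <= mu * (Rabs (v j) * Rabs (v l))).
    { rewrite !Rabs_mult, (Rmult_comm mu). apply Rmult_le_compat_l; auto.
      apply Rmult_le_pos; apply Rabs_pos. }
    pose proof (Rle_abs (- (v j * v l * gram d Phi j l))). rewrite Rabs_Ropp in *. lra.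
Qed.

Lemma restricted_lower v s :
  (l0 n v <= s)%nat -> (1 + mu - mu * INR s) * ip n v v <= ip d (mulv n Phi v) (mulv n Phi v).
Proof.
  intros Hs.
  pose proof (gram_lower v). pose proof (norm1_sq_le_l0 n v).
  pose proof (coherence_ge0 d n Phi). pose proof (ip_ge0 n v).
  assert (INR (l0 n v) <= INR s) by (apply le_INR; auto).
  assert (mu * norm1 n v ^ 2 <= mu * (INR s * ip n v v)) by (apply Rmult_le_compat_l; nra).
  nra.
Qed.

Lemma gram_upper v : mu <= 1 -> ip d (mulv n Phi v) (mulv n Phi v) <= norm1 n v ^ 2.
Proof.
  intros Hmu. rewrite ip_mulv_mulv.
  replace (norm1 n v ^ 2) with (rsum n (fun j => rsum n (fun l => Rabs (v j) * Rabs (v l)))).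
  2:{ rewrite (rsum_ext n _ (fun j => norm1 n v * Rabs (v j))).
      - rewrite rsum_scal. unfold norm1; ring.
      - intros. rewrite rsum_scal. unfold norm1; ring. }
  apply rsum_le; intros j Hj. apply rsum_le; intros l Hl.
  pose proof (gram_le1 j l Hmu Hj Hl).
  pose proof (Rle_abs (v j * v l * gram d Phi j l)). rewrite !Rabs_mult in *.
  assert (Rabs (v j) * Rabs (v l) * Rabs (gram d Phi j l) <= Rabs (v j) * Rabs (v l) * 1)
    by (apply Rmult_le_compat_l; [apply Rmult_le_pos; apply Rabs_pos | auto]).
  lra.
Qed.

Lemma corr_outside v i :
  (i < n)%nat -> v i = 0 -> Rabs (ip d (col Phi i) (mulv n Phi v)) <= mu * norm1 n v.
Proof.
  intros Hi Hv. rewrite ip_sym, ip_mulv.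
  eapply Rle_trans; [apply rsum_abs|].
  unfold norm1. rewrite <- rsum_scal. apply rsum_le; intros l Hl.
  change (ip d (col Phi l) (col Phi i)) with (gram d Phi l i).
  rewrite Rabs_mult. destruct (Nat.eq_dec l i) as [->|Hli].
  - rewrite Hv, Rabs_R0. pose proof (coherence_ge0 d n Phi). lra.
  - rewrite (Rmult_comm mu). apply Rmult_le_compat_l; [apply Rabs_pos|].
    apply gram_off; auto.
Qed.

Lemma corr_inside v i :
  (i < n)%nat ->
  Rabs (v i) - mu * (norm1 n v - Rabs (v i)) <= Rabs (ip d (col Phi i) (mulv n Phi v)).
Proof.
  intros Hi. rewrite ip_sym, ip_mulv.
  set (S := rsum n (fun l => v l * ip d (col Phi l) (col Phi i))).
  assert (Rabs (S - v i) <= mu * (norm1 n v - Rabs (v i))).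
  { unfold S. rewrite <- (rsum_delta n i (v i)) at 1 by auto. rewrite <- rsum_minus.
    eapply Rle_trans; [apply rsum_abs|].
    replace (mu * (norm1 n v - Rabs (v i))) with
      (rsum n (fun l => mu * Rabs (v l) - (if Nat.eq_dec l i then mu * Rabs (v i) else 0))).
    2:{ rewrite rsum_minus, rsum_delta, rsum_scal by auto. unfold norm1; ring. }
    apply rsum_le; intros l Hl.
    change (ip d (col Phi l) (col Phi i)) with (gram d Phi l i).
    destruct (Nat.eq_dec l i) as [->|Hli].
    - rewrite gram_diag by auto. replace (v i * 1 - v i) with 0 by ring. rewrite Rabs_R0. lra.
    - rewrite Rminus_0_r, Rminus_0_r, Rabs_mult, (Rmult_comm mu).
      apply Rmult_le_compat_l; [apply Rabs_pos | apply gram_off; auto]. }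
  pose proof (Rabs_triang_inv (v i) S). rewrite Rabs_minus_sym in H. lra.
Qed.

Lemma erc_selection m v ik :
  (2 * INR m - 1) * mu < 1 -> (l0 n v <= m)%nat ->
  (exists j, (j < n)%nat /\ v j <> 0) -> (ik < n)%nat ->
  (forall i, (i < n)%nat ->
     Rabs (ip d (col Phi i) (mulv n Phi v)) <= Rabs (ip d (col Phi ik) (mulv n Phi v))) ->
  v ik <> 0.
Proof.
  intros Hmu Hl0 [j0 [Hj0 Hv0]] Hik Hmax Hvik.
  pose proof (coherence_ge0 d n Phi) as Hmu0.
  destruct (argmax_exists n (fun j => Rabs (v j)) ltac:(lia)) as [i [Hi Hargmax]].
  set (M := Rabs (v i)) in *.
  assert (HM : 0 < M) by (pose proof (Hargmax j0 Hj0); pose proof (Rabs_pos_lt _ Hv0); lra).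
  assert (HA : norm1 n v <= INR m * M).
  { eapply Rle_trans; [apply norm1_le_l0_max; [apply Hargmax | lra]|].
    apply Rmult_le_compat_r; [lra | apply le_INR; auto]. }
  pose proof (corr_inside v i Hi). pose proof (corr_outside v ik Hik Hvik).
  pose proof (Hmax i Hi). fold M in H.
  assert (mu * norm1 n v <= mu * (INR m * M)) by (apply Rmult_le_compat_l; auto).
  assert (Hbad : (1 + mu) * M <= (2 * INR m * mu) * M) by lra.
  assert (((2 * INR m - 1) * mu) * M < 1 * M) by (apply Rmult_lt_compat_r; auto).
  lra.
Qed.

End Coherence.

Lemma sparsity_margin mu m : 0 <= mu -> (1 <= m)%nat -> (2 * INR m - 1) * mu < 1 -> mu * INR m < 1.
Proof.
  intros Hmu Hm H. assert (1 <= INR m) by (apply (le_INR 1); auto). nra.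
Qed.

Definition residual (n : nat) (Phi : nat -> nat -> R) (y x : nat -> R) : nat -> R :=
  vsub y (mulv n Phi x).

Definition atom (beta sg : R) (ik : nat) : nat -> R := fun j => sg * beta * e_vec ik j.

Definition segment (xk s : nat -> R) (g : R) : nat -> R := fun j => xk j + g * (s j - xk j).

Lemma fobj_eq d n Phi y x :
  fobj d n Phi y x = / 2 * ip d (residual n Phi y x) (residual n Phi y x).
Proof. unfold fobj. rewrite norm2_sq. reflexivity. Qed.

Lemma fobj_ge0 d n Phi y x : 0 <= fobj d n Phi y x.
Proof. rewrite fobj_eq. pose proof (ip_ge0 d (residual n Phi y x)). lra. Qed.

Lemma residual_sparse n Phi xs x :
  residual n Phi (mulv n Phi xs) x = mulv n Phi (vsub xs x).
Proof.
  apply functional_extensionality; intro i. unfold residual, vsub, mulv.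
  rewrite <- rsum_minus. apply rsum_ext; intros; ring.
Qed.

Lemma fobj_segment d n Phi y xk s g :
  fobj d n Phi y (segment xk s g) =
  / 2 * (ip d (residual n Phi y xk) (residual n Phi y xk)
         - 2 * g * ip d (mulv n Phi (vsub s xk)) (residual n Phi y xk)
         + g ^ 2 * ip d (mulv n Phi (vsub s xk)) (mulv n Phi (vsub s xk))).
Proof.
  rewrite fobj_eq.
  assert (E : residual n Phi y (segment xk s g) =
              fun i => residual n Phi y xk i - g * mulv n Phi (vsub s xk) i).
  { apply functional_extensionality; intro i. unfold residual, segment, vsub, mulv.
    rewrite (rsum_ext n _ (fun j => Phi i j * xk j + g * (Phi i j * (s j - xk j))))
      by (intros; ring).
    rewrite rsum_plus, rsum_scal. ring. }
  rewrite E. unfold ip. f_equal.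
  rewrite <- !rsum_scal, <- rsum_minus, <- rsum_plus. apply rsum_ext; intros; ring.
Qed.

Lemma norm1_ge0 n v : 0 <= norm1 n v.
Proof. apply rsum_ge0; intros; apply Rabs_pos. Qed.

Lemma norm1_vsub n u v : norm1 n (vsub u v) <= norm1 n u + norm1 n v.
Proof.
  unfold norm1. rewrite <- rsum_plus. apply rsum_le; intros j _. unfold vsub.
  pose proof (Rabs_triang (u j) (- v j)). rewrite Rabs_Ropp in H. unfold Rminus. lra.
Qed.

Lemma norm1_segment n xk s g :
  0 <= g <= 1 -> norm1 n (segment xk s g) <= (1 - g) * norm1 n xk + g * norm1 n s.
Proof.
  intros Hg. unfold norm1, segment. rewrite <- !rsum_scal, <- rsum_plus.
  apply rsum_le; intros j _.
  replace (xk j + g * (s j - xk j)) with ((1 - g) * xk j + g * s j) by ring.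
  eapply Rle_trans; [apply Rabs_triang|].
  rewrite !Rabs_mult, (Rabs_right g), (Rabs_right (1 - g)) by lra. lra.
Qed.

Lemma atom_norm1 n beta sg ik :
  0 <= beta -> (sg = 1 \/ sg = -1) -> (ik < n)%nat -> norm1 n (atom beta sg ik) = beta.
Proof.
  intros Hb Hsg Hik. unfold norm1, atom.
  rewrite (rsum_ext n _ (fun j => e_vec ik j * beta)).
  - apply (rsum_evec n ik (fun _ => beta)); auto.
  - intros j _. unfold e_vec. destruct (Nat.eq_dec j ik).
    + rewrite Rmult_1_r, Rmult_1_l, Rabs_mult, (Rabs_right beta) by lra.
      destruct Hsg as [-> | ->]; [rewrite Rabs_R1 | rewrite Rabs_left by lra]; ring.
    + rewrite Rmult_0_r, Rabs_R0. ring.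
Qed.

Lemma sign_choice sg c :
  (sg = 1 \/ sg = -1) -> (0 < c -> sg = 1) -> (c < 0 -> sg = -1) -> sg * c = Rabs c.
Proof.
  intros Hsg Hpos Hneg. destruct (Rlt_le_dec 0 c).
  - rewrite Hpos, Rabs_right by lra. ring.
  - destruct (Rlt_le_dec c 0).
    + rewrite Hneg, Rabs_left by lra. ring.
    + replace c with 0 by lra. rewrite Rabs_R0. ring.
Qed.

Lemma fw_step_unpack d n Phi y beta xk xk1 :
  fw_step d n Phi y beta xk xk1 ->
  exists ik sg gam,
    (ik < n)%nat /\
    (forall i, (i < n)%nat ->
       Rabs (ip d (col Phi i) (residual n Phi y xk)) <=
       Rabs (ip d (col Phi ik) (residual n Phi y xk))) /\
    (sg = 1 \/ sg = -1) /\
    sg * ip d (col Phi ik) (residual n Phi y xk) =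
      Rabs (ip d (col Phi ik) (residual n Phi y xk)) /\
    0 <= gam <= 1 /\
    (forall g, 0 <= g <= 1 ->
       fobj d n Phi y (segment xk (atom beta sg ik) gam) <=
       fobj d n Phi y (segment xk (atom beta sg ik) g)) /\
    xk1 = segment xk (atom beta sg ik) gam.
Proof.
  intros (ik & sg & gam & Hik & Hmax & Hsg & Hpos & Hneg & Hrest).
  cbv zeta in Hrest. destruct Hrest as (Hgam & Hmin & Hx).
  exists ik, sg, gam. repeat split; try apply Hgam; auto. apply sign_choice; auto.
Qed.

Section FrankWolfeStep.

Variables (d n : nat) (Phi : nat -> nat -> R) (xs xk : nat -> R) (beta sg gam : R) (ik : nat).
Local Notation mu := (coherence d n Phi).
Local Notation y := (mulv n Phi xs).
Local Notation r := (residual n Phi (mulv n Phi xs) xk).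
Local Notation corr i := (ip d (col Phi i) (residual n Phi (mulv n Phi xs) xk)).
Local Notation s := (atom beta sg ik).
Local Notation P := (mulv n Phi (vsub (atom beta sg ik) xk)).

Hypothesis Hd : dictionary d n Phi.
Hypothesis Hik : (ik < n)%nat.
Hypothesis Hmax : forall i, (i < n)%nat -> Rabs (corr i) <= Rabs (corr ik).
Hypothesis Hsg : sg = 1 \/ sg = -1.
Hypothesis Hsign : sg * corr ik = Rabs (corr ik).
Hypothesis Hgam : 0 <= gam <= 1.
Hypothesis Hmin : forall g, 0 <= g <= 1 ->
  fobj d n Phi y (segment xk s gam) <= fobj d n Phi y (segment xk s g).
Hypothesis Hxk1 : norm1 n xk <= beta.

(* Duality gap: since ||x*||_1 <= beta and s maximises the correlation over
   the l1-ball, ||r||^2 = <Phi(x* - x_k), r> <= <Phi(s - x_k), r>. *)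
Lemma fw_gap : norm1 n xs <= beta -> ip d r r <= ip d P r.
Proof.
  intros Hxs1.
  assert (Hs : rsum n (fun j => s j * corr j) = beta * Rabs (corr ik)).
  { rewrite <- Hsign.
    rewrite (rsum_ext n _ (fun j => e_vec ik j * (sg * beta * corr j))).
    - rewrite rsum_evec by auto. ring.
    - intros; unfold atom; ring. }
  assert (HPr : ip d P r = rsum n (fun j => s j * corr j) - rsum n (fun j => xk j * corr j)).
  { rewrite ip_mulv, <- rsum_minus. apply rsum_ext; intros; unfold vsub; ring. }
  assert (Hrr : ip d r r = rsum n (fun j => xs j * corr j) - rsum n (fun j => xk j * corr j)).
  { rewrite (residual_sparse n Phi xs xk) at 1.
    rewrite ip_mulv, <- rsum_minus. apply rsum_ext; intros; unfold vsub; ring. }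
  assert (Hxs : rsum n (fun j => xs j * corr j) <= norm1 n xs * Rabs (corr ik)).
  { unfold norm1. rewrite <- rsum_scalr. apply rsum_le; intros j Hj.
    pose proof (Rle_abs (xs j * corr j)). rewrite Rabs_mult in H.
    assert (Rabs (xs j) * Rabs (corr j) <= Rabs (xs j) * Rabs (corr ik))
      by (apply Rmult_le_compat_l; [apply Rabs_pos | auto]).
    lra. }
  pose proof (Rabs_pos (corr ik)).
  assert (norm1 n xs * Rabs (corr ik) <= beta * Rabs (corr ik)) by (apply Rmult_le_compat_r; lra).
  lra.
Qed.

(* The direction s - x_k has l1 norm at most 2 beta, hence ||Phi (s - x_k)||^2 <= 4 beta^2. *)
Lemma fw_direction_bound : mu <= 1 -> ip d P P <= 4 * beta ^ 2.
Proof.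
  intros Hmu. eapply Rle_trans; [apply gram_upper; auto|].
  pose proof (norm1_ge0 n xk). pose proof (norm1_ge0 n (vsub s xk)).
  pose proof (norm1_vsub n s xk). rewrite atom_norm1 in H1 by (auto; lra).
  nra.
Qed.

Lemma fw_descent g :
  mu <= 1 -> norm1 n xs <= beta -> 0 <= g <= 1 ->
  fobj d n Phi y (segment xk s gam) <=
  fobj d n Phi y xk - 2 * g * fobj d n Phi y xk + 2 * g ^ 2 * beta ^ 2.
Proof.
  intros Hmu Hxs1 Hg.
  apply Rle_trans with (fobj d n Phi y (segment xk s g)); [apply Hmin; auto|].
  rewrite fobj_segment, fobj_eq.
  pose proof fw_gap Hxs1. pose proof (fw_direction_bound Hmu). pose proof (ip_ge0 d r).
  assert (g * ip d r r <= g * ip d P r) by (apply Rmult_le_compat_l; lra).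
  assert (g ^ 2 * ip d P P <= g ^ 2 * (4 * beta ^ 2)) by (apply Rmult_le_compat_l; nra).
  lra.
Qed.

Variable m : nat.
Hypothesis Hm : (1 <= m)%nat.
Hypothesis Hmu : (2 * INR m - 1) * mu < 1.
Hypothesis Hl0 : (l0 n xs <= m)%nat.
Hypothesis Hsupp : supported_in n xs xk.
Hypothesis Hbeta : 0 < beta.

(* When the residual vanishes, x_k is optimal; moving towards an atom outside
   Lambda_opt gives an (m+1)-sparse direction with ||Phi (s - x_k)|| > 0 by the
   restricted lower frame bound, so the exact line search stays at gamma = 0. *)
Lemma fw_zero_residual_stalls : (forall i, (i < d)%nat -> r i = 0) -> xs ik = 0 -> gam = 0.
Proof.
  intros Hr0 Hxik.
  pose proof (sparsity_margin mu m (coherence_ge0 d n Phi) Hm Hmu) as Hmargin.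
  assert (Hxkik : xk ik = 0) by (apply Hsupp; auto).
  destruct (Req_dec gam 0) as [|Hg0]; auto. exfalso.
  assert (HPP : ip d P P <= 0).
  { pose proof (Hmin 0 ltac:(lra)) as H0.
    rewrite !fobj_segment, !(ip_zero_r d _ r Hr0) in H0.
    assert (0 < gam ^ 2) by (apply pow_lt; lra). nra. }
  assert (HD : (l0 n (vsub s xk) <= S m)%nat).
  { eapply Nat.le_trans; [|apply le_n_S, Hl0]. apply (l0_mono_plus_one n xs _ ik).
    intros j Hj Hjik Hxj. unfold vsub, atom, e_vec.
    destruct (Nat.eq_dec j ik); [contradiction|]. rewrite Hsupp by auto. ring. }
  pose proof (restricted_lower d n Phi Hd (vsub s xk) (S m) HD) as Hlow.
  rewrite S_INR in Hlow.
  assert (Hcoord : beta ^ 2 <= ip n (vsub s xk) (vsub s xk)).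
  { replace (beta ^ 2) with (vsub s xk ik * vsub s xk ik).
    - apply (rsum_ge_term n (fun j => vsub s xk j * vsub s xk j)); auto. intros; nra.
    - unfold vsub, atom, e_vec. rewrite Hxkik. destruct (Nat.eq_dec ik ik); [|contradiction].
      destruct Hsg as [-> | ->]; ring. }
  assert (0 < beta ^ 2) by (apply pow_lt; lra).
  nra.
Qed.

(* If the selected atom lies outside Lambda_opt, the line search does not move:
   a nonzero x* - x_k is excluded by the exact recovery condition, and a zero
   one is the previous lemma. *)
Lemma fw_outside_atom_stalls : xs ik = 0 -> gam = 0.
Proof.
  intros Hxik.
  destruct (classic (exists j, (j < n)%nat /\ vsub xs xk j <> 0)) as [Hne | Hzero].
  - exfalso.
    refine (erc_selection d n Phi Hd m (vsub xs xk) ik Hmu _ Hne Hik _ _).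
    + eapply Nat.le_trans; [|apply Hl0]. apply l0_mono.
      intros j Hj Hx. unfold vsub. rewrite Hx, Hsupp by auto. ring.
    + intros i Hi. rewrite <- residual_sparse. apply Hmax; auto.
    + unfold vsub. rewrite Hxik, Hsupp by auto. ring.
  - apply fw_zero_residual_stalls; auto.
    intros i _. rewrite residual_sparse. unfold mulv. apply rsum_zero. intros j Hj.
    replace (vsub xs xk j) with 0; [ring|].
    destruct (Req_dec (vsub xs xk j) 0); auto. exfalso; eauto.
Qed.

Lemma fw_keeps_support : supported_in n xs (segment xk s gam).
Proof.
  intros j Hj Hxj. unfold segment. rewrite (Hsupp j Hj Hxj).
  destruct (Nat.eq_dec j ik) as [->|Hjik].
  - rewrite (fw_outside_atom_stalls Hxj). ring.
  - unfold atom, e_vec. destruct (Nat.eq_dec j ik); [contradiction|]. ring.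
Qed.

End FrankWolfeStep.

Lemma fw_step_invariant d n Phi m xs beta xk xk1 :
  dictionary d n Phi -> (1 <= m)%nat -> (2 * INR m - 1) * coherence d n Phi < 1 ->
  (l0 n xs <= m)%nat -> 0 < beta ->
  supported_in n xs xk -> norm1 n xk <= beta ->
  fw_step d n Phi (mulv n Phi xs) beta xk xk1 ->
  supported_in n xs xk1 /\ norm1 n xk1 <= beta.
Proof.
  intros Hd Hm Hmu Hl0 Hb Hsupp Hxk1 Hstep.
  destruct (fw_step_unpack _ _ _ _ _ _ _ Hstep)
    as (ik & sg & gam & Hik & Hmax & Hsg & Hsign & Hgam & Hmin & ->).
  split.
  - eapply fw_keeps_support; eauto.
  - pose proof (norm1_segment n xk (atom beta sg ik) gam Hgam).
    rewrite atom_norm1 in H by (auto; lra). nra.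
Qed.

Lemma fw_step_descent d n Phi xs beta xk xk1 :
  dictionary d n Phi -> coherence d n Phi <= 1 -> norm1 n xs <= beta -> norm1 n xk <= beta ->
  fw_step d n Phi (mulv n Phi xs) beta xk xk1 ->
  forall g, 0 <= g <= 1 ->
    fobj d n Phi (mulv n Phi xs) xk1 <=
    fobj d n Phi (mulv n Phi xs) xk - 2 * g * fobj d n Phi (mulv n Phi xs) xk + 2 * g ^ 2 * beta ^ 2.
Proof.
  intros Hd Hmu Hxs1 Hxk1 Hstep.
  destruct (fw_step_unpack _ _ _ _ _ _ _ Hstep)
    as (ik & sg & gam & Hik & Hmax & Hsg & Hsign & Hgam & Hmin & ->).
  intros g Hg. eapply fw_descent; eauto.
Qed.

Lemma recovery_error_bound d n Phi m xs xk :
  dictionary d n Phi -> (l0 n xs <= m)%nat -> supported_in n xs xk ->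
  (1 + coherence d n Phi - coherence d n Phi * INR m) * norm2 n (vsub xk xs) ^ 2 <=
  2 * fobj d n Phi (mulv n Phi xs) xk.
Proof.
  intros Hd Hl0 Hsupp.
  rewrite fobj_eq, residual_sparse, norm2_sq.
  replace (ip n (vsub xk xs) (vsub xk xs)) with (ip n (vsub xs xk) (vsub xs xk))
    by (unfold ip, vsub; apply rsum_ext; intros; ring).
  enough ((1 + coherence d n Phi - coherence d n Phi * INR m) * ip n (vsub xs xk) (vsub xs xk)
          <= ip d (mulv n Phi (vsub xs xk)) (mulv n Phi (vsub xs xk))) by lra.
  apply restricted_lower; auto.
  eapply Nat.le_trans; [|apply Hl0]. apply l0_mono.
  intros j Hj Hx. unfold vsub. rewrite Hx, Hsupp by auto. ring.
Qed.

(* A nonnegative sequence obeying the Frank-Wolfe recursion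
   f_{k+1} <= (1 - 2g) f_k + 2 g^2 B (g in [0,1]) eventually drops below any
   eps > 0: otherwise a fixed step g ~ eps / B decreases it linearly forever. *)
Lemma recursion_eventually_small (f : nat -> R) (B eps : R) :
  0 < B -> 0 < eps -> (forall k, 0 <= f k) ->
  (forall k g, 0 <= g <= 1 -> f (S k) <= f k - 2 * g * f k + 2 * g ^ 2 * B) ->
  exists N, f N < eps.
Proof.
  intros HB He Hpos Hrec. apply NNPP. intro Hno.
  assert (Hge : forall N, eps <= f N).
  { intro N. destruct (Rlt_le_dec (f N) eps); auto. exfalso; eauto. }
  set (g := Rmin 1 (eps / (2 * B))).
  assert (Hg0 : 0 < g) by (apply Rmin_pos; [lra | apply Rdiv_lt_0_compat; lra]).
  assert (Hg1 : g <= 1) by apply Rmin_l.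
  assert (HgB : g * B <= eps / 2).
  { pose proof (Rmin_r 1 (eps / (2 * B))). fold g in H.
    apply Rmult_le_compat_r with (r := B) in H; [|lra].
    replace (eps / (2 * B) * B) with (eps / 2) in H by (field; lra). lra. }
  assert (Hlin : forall k, f k <= f 0%nat - INR k * (g * eps)).
  { induction k; [simpl; lra|]. rewrite S_INR.
    pose proof (Hrec k g ltac:(lra)). pose proof (Hge k).
    assert (g * eps <= g * f k) by (apply Rmult_le_compat_l; lra).
    assert (g ^ 2 * B <= g * (eps / 2))
      by (replace (g ^ 2 * B) with (g * (g * B)) by ring; apply Rmult_le_compat_l; lra).
    lra. }
  destruct (INR_unbounded (f 0%nat / (g * eps))) as [K Hk].
  pose proof (Hlin K). pose proof (Hge K).
  assert (f 0%nat < INR K * (g * eps)).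
  { apply Rmult_lt_compat_r with (r := g * eps) in Hk; [|nra].
    replace (f 0%nat / (g * eps) * (g * eps)) with (f 0%nat) in Hk by (field; nra). lra. }
  lra.
Qed.

(* Such a sequence is nonincreasing (take g = 0), hence tends to 0. *)
Lemma descent_to_zero (f : nat -> R) (B : R) :
  0 < B -> (forall k, 0 <= f k) ->
  (forall k g, 0 <= g <= 1 -> f (S k) <= f k - 2 * g * f k + 2 * g ^ 2 * B) ->
  Un_cv f 0.
Proof.
  intros HB Hpos Hrec eps He.
  destruct (recursion_eventually_small f B eps HB He Hpos Hrec) as [N HN].
  exists N. intros k Hk.
  assert (Hmono : f k <= f N).
  { induction Hk as [|k Hk IH]; [lra|]. pose proof (Hrec k 0 ltac:(lra)). lra. }
  unfold Rdist. rewrite Rminus_0_r, Rabs_right by (apply Rle_ge, Hpos). lra.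
Qed.

Lemma cv_of_quadratic_bound (a b : nat -> R) (c : R) :
  0 < c -> (forall k, 0 <= a k) -> (forall k, c * a k ^ 2 <= b k) -> Un_cv b 0 -> Un_cv a 0.
Proof.
  intros Hc Ha Hab Hb eps He.
  destruct (Hb (c * eps ^ 2)) as [N HN]; [apply Rmult_lt_0_compat; [lra | apply pow_lt; lra]|].
  exists N. intros k Hk. specialize (HN k Hk). pose proof (Hab k). pose proof (Ha k).
  unfold Rdist in *. rewrite Rminus_0_r in *. rewrite Rabs_right by lra.
  pose proof (Rle_abs (b k)).
  assert (a k ^ 2 < eps ^ 2) by (apply Rmult_lt_reg_l with c; lra).
  nra.
Qed.

Theorem corollary1 (d n : nat) (Phi : nat -> nat -> R) (m : nat)
    (xs y : nat -> R) (beta : R) (x : nat -> nat -> R) :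
  dictionary d n Phi ->
  (1 <= m)%nat ->
  (2 * INR m - 1) * coherence d n Phi < 1 ->
  (l0 n xs <= m)%nat ->
  y = mulv n Phi xs ->
  0 < beta ->
  norm1 n xs <= beta ->
  fw_iterates d n Phi y beta x ->
  Un_cv (fun k => norm2 n (vsub (x k) xs)) 0.
Proof.
  intros Hd Hm Hmu Hl0 -> Hb Hxs1 [Hx0 Hsteps].
  pose proof (coherence_ge0 d n Phi) as Hmu0.
  pose proof (sparsity_margin _ _ Hmu0 Hm Hmu) as Hmargin.
  assert (Hmu1 : coherence d n Phi <= 1) by (pose proof (le_INR 1 m Hm); simpl in *; nra).
  assert (Hinv : forall k, supported_in n xs (x k) /\ norm1 n (x k) <= beta).
  { induction k as [|k [Hsupp Hxk1]].
    - rewrite Hx0. split; [intros j _ _; reflexivity|].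
      unfold norm1. rewrite rsum_zero; [lra | intros; apply Rabs_R0].
    - eapply fw_step_invariant; eauto. }
  apply (cv_of_quadratic_bound _ (fun k => fobj d n Phi (mulv n Phi xs) (x k))
           ((1 + coherence d n Phi - coherence d n Phi * INR m) / 2)).
  - lra.
  - intro k. apply sqrt_pos.
  - intro k. pose proof (recovery_error_bound d n Phi m xs (x k) Hd Hl0 (proj1 (Hinv k))). lra.
  - apply (descent_to_zero _ (beta ^ 2)); [apply pow_lt; lra | intro; apply fobj_ge0 |].
    intros k g Hg. destruct (Hinv k).
    eapply fw_step_descent; eauto.
Qed.
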